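(* Let $P$ be a set of $n\geq 5$ points in general position in the plane and let $\mathcal{P}$ be the set of all closed segments with both endpoints in $P$. If $\mathcal{P}$ contains $5$ pairwise disjoint segments each of which is clean in $\mathcal{P}$, then $\mu(D(P))\geq\binom{n}{2}-5$.
   Context: General position means no three points collinear. Two segments of $\mathcal{P}$ cross if they meet in a single point that is interior to both; a segment of $\mathcal{P}$ is clean in $\mathcal{P}$ if no other segment of $\mathcal{P}$ crosses it. $D(P)$ is the graph with vertex set $\mathcal{P}$, two segments adjacent iff disjoint. For a graph $G$ and $U\subseteq V(G)$, two distinct vertices $x,y\in U$ are $U$-mutually visible if $G$ contains a shortest $x$-$y$ path none of whose internal vertices lies in $U$; $U$ is a mutual-visibility set if every two distinct vertices of $U$ are $U$-mutually visible. $\mu(G)$ is the maximum size of a mutual-visibility set of $G$. *)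

From HB Require Import structures.
From mathcomp Require Import all_boot all_order all_algebra.
Set Implicit Arguments. Unset Strict Implicit. Unset Printing Implicit Defensive.
Import Order.TTheory GRing.Theory Num.Theory.
Local Open Scope ring_scope.

Section Geometry.
Variable R : realFieldType.
Definition pt := (R * R)%type.

Definition orient (a b c : pt) : R :=
  (b.1 - a.1) * (c.2 - a.2) - (b.2 - a.2) * (c.1 - a.1).
Definition collinear (a b c : pt) : Prop := orient a b c = 0.

Definition on_cseg (a b x : pt) : Prop :=
  exists t : R, 0 <= t <= 1 /\
    x = ((1 - t) * a.1 + t * b.1, (1 - t) * a.2 + t * b.2).
Definition on_oseg (a b x : pt) : Prop :=
  exists t : R, 0 < t < 1 /\
    x = ((1 - t) * a.1 + t * b.1, (1 - t) * a.2 + t * b.2).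

Definition seg_cross (a b c d : pt) : Prop :=
  exists x : pt, (forall y, (on_cseg a b y /\ on_cseg c d y) <-> y = x) /\
    on_oseg a b x /\ on_oseg c d x.
Definition seg_disjoint (a b c d : pt) : Prop :=
  forall y, ~ (on_cseg a b y /\ on_cseg c d y).
End Geometry.

(* point set P = image of p : 'I_n -> pt; general position *)
Definition general_position (R : realFieldType) (n : nat) (p : 'I_n -> pt R) : Prop :=
  forall i j k : 'I_n, i != j -> j != k -> i != k -> ~ collinear (p i) (p j) (p k).

(* the segments of P: unordered pairs {i,j}, represented with i < j *)
Definition seg (n : nat) := {e : 'I_n * 'I_n | (e.1 < e.2)%N}.

Definition seg_crossP (R : realFieldType) (n : nat) (p : 'I_n -> pt R) (s t : seg n) : Prop :=
  seg_cross (p (val s).1) (p (val s).2) (p (val t).1) (p (val t).2).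
Definition seg_disjointP (R : realFieldType) (n : nat) (p : 'I_n -> pt R) (s t : seg n) : Prop :=
  seg_disjoint (p (val s).1) (p (val s).2) (p (val t).1) (p (val t).2).

Definition clean (R : realFieldType) (n : nat) (p : 'I_n -> pt R) (s : seg n) : Prop :=
  forall t : seg n, t != s -> ~ seg_crossP p s t.

Section Visibility.
Variables (V : finType) (e : V -> V -> Prop).

(* a walk x -> v1 -> ... -> vk = y is the sequence [:: v1; ...; vk] *)
Definition walk (x y : V) (s : seq V) : Prop :=
  (forall i, (i < size s)%N -> e (nth x (x :: s) i) (nth x s i)) /\ last x s = y.
Definition shortest_walk (x y : V) (s : seq V) : Prop :=
  walk x y s /\ forall s' : seq V, walk x y s' -> (size s <= size s')%N.
Definition internal (x : V) (s : seq V) : seq V := behead (belast x s).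

Definition mutually_visible (U : {set V}) (x y : V) : Prop :=
  exists s : seq V, shortest_walk x y s /\ all (fun v => v \notin U) (internal x s).
Definition mv_set (U : {set V}) : Prop :=
  forall x y : V, x \in U -> y \in U -> x != y -> mutually_visible U x y.
(* mu(G) >= k, i.e. the maximum size of a mutual-visibility set is at least k *)
Definition mu_ge (k : nat) : Prop := exists U : {set V}, mv_set U /\ (k <= #|U|)%N.
End Visibility.

(* Take U to be all segments except the 5 clean ones.  Two non-disjoint segments x, y of U
   have at most 4 endpoints, while the 5 clean segments, being pairwise disjoint, have
   pairwise distinct endpoints; so some clean segment s avoids every endpoint of x and y.
   In general position two closed segments with four distinct endpoints that meet must
   cross, and s is crossed by nothing, so s is disjoint from x and y: x - s - y is a
   shortest path of D(P) whose only internal vertex lies outside U. *)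

From mathcomp Require Import all_boot all_order all_algebra ring.
From Stdlib Require Import Classical.
Set Implicit Arguments. Unset Strict Implicit. Unset Printing Implicit Defensive.
Import Order.TTheory GRing.Theory Num.Theory.

Lemma card_seg n : #|{: seg n}| = 'C(n, 2).
Proof.
rewrite -card_ltn_sorted_tuples -cardsT.
pose f (s : seg n) : 2.-tuple 'I_n := [tuple (val s).1; (val s).2].
have f_inj : injective f.
  move=> [[a1 b1] h1] [[a2 b2] h2] /(congr1 val) /= [E1 E2].
  by apply: val_inj; rewrite /= E1 E2.
rewrite -(card_imset _ f_inj); apply: eq_card => t; rewrite inE.
apply/imsetP/idP => [[s _ ->] | ]; first by rewrite /= andbT; exact: (valP s).
case: t => [[|a [|b [|]]] //= size2]; rewrite andbT => lt_ab.
by exists (exist _ (a, b) lt_ab); last exact: val_inj.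
Qed.

Lemma exists_disjoint_from (I T : finType) (F : I -> {set T}) (S : {set I}) (E : {set T}) :
  {in S &, forall i j, i != j -> [disjoint F i & F j]} -> (#|E| < #|S|)%N ->
  exists2 i, i \in S & [disjoint F i & E].
Proof.
move=> disjF ltES.
have [i0 i0S] : exists i0, i0 \in S.
  by apply/set0Pn; rewrite -card_gt0 (leq_ltn_trans (leq0n _) ltES).
apply/exists_inP; apply: contraLR ltES => /exists_inPn meetE; rewrite -leqNgt.
have meetE' i : i \in S -> exists x, x \in F i :&: E.
  by move=> iS; apply/set0Pn; rewrite setI_eq0; exact: meetE.
have [x0 _] := meetE' i0 i0S.
pose f i := odflt x0 [pick x in F i :&: E].
have fP i : i \in S -> f i \in F i :&: E.
  move=> iS; rewrite /f; case: pickP => [//| none].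
  by have [x] := meetE' i iS; rewrite none.
have f_inj : {in S &, injective f}.
  move=> i j iS jS fij; apply/eqP; apply: contraT.
  move=> /(disjF i j iS jS)/disjointFr/(_ (setIP (fP i iS)).1).
  by rewrite fij (setIP (fP j jS)).1.
rewrite -(card_in_imset f_inj); apply: subset_leq_card; apply/subsetP => _ /imsetP[i iS ->].
exact: (setIP (fP i iS)).2.
Qed.

Section Visibility.
Variables (V : finType) (e : V -> V -> Prop) (U : {set V}).

Lemma walk_size_gt0 x y s : x != y -> walk e x y s -> (0 < size s)%N.
Proof. by case: s => // xy [_ /= yx]; rewrite yx eqxx in xy. Qed.

Lemma walk_size_gt1 x y s : x != y -> ~ e x y -> walk e x y s -> (1 < size s)%N.
Proof.
move=> xy nexy w; have := walk_size_gt0 xy w.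
case: s w => [|z [|//]] // [exz /= zy] _.
by case: nexy; rewrite -zy; exact: (exz 0%N).
Qed.

Lemma mutually_visible_adj x y : x != y -> e x y -> mutually_visible e U x y.
Proof.
move=> xy exy; exists [:: y]; split=> //; split; first by split=> // [[|]].
by move=> s; apply: walk_size_gt0.
Qed.

Lemma mutually_visible_via x y z : x != y -> ~ e x y -> e x z -> e z y -> z \notin U ->
  mutually_visible e U x y.
Proof.
move=> xy nexy exz ezy zU; exists [:: z; y]; split; last by rewrite /= zU.
split; first by split=> // [[|[|]]].
by move=> s; apply: walk_size_gt1.
Qed.

Lemma mv_set_common_neighbour :
  (forall x y, x \in U -> y \in U -> x != y -> ~ e x y ->
     exists2 z, z \notin U & e x z /\ e z y) ->
  mv_set e U.
Proof.
move=> common x y xU yU xy; have [exy | nexy] := classic (e x y).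
  exact: mutually_visible_adj.
have [z zU [exz ezy]] := common x y xU yU xy nexy.
exact: mutually_visible_via ezy zU.
Qed.

End Visibility.

Local Open Scope ring_scope.

Section Segments.
Variable R : realFieldType.
Implicit Types (a b c d x y : pt R) (t u : R).

Definition lerp a b t : pt R := ((1 - t) * a.1 + t * b.1, (1 - t) * a.2 + t * b.2).

Lemma lerp0 a b : lerp a b 0 = a.
Proof. by case: a => a1 a2; rewrite /lerp /=; congr (_, _); ring. Qed.

Lemma lerp1 a b : lerp a b 1 = b.
Proof. by case: b => b1 b2; rewrite /lerp /=; congr (_, _); ring. Qed.

Lemma collinear_lerp a b t : collinear a b (lerp a b t).
Proof. by rewrite /collinear /orient /lerp /=; ring. Qed.

Lemma on_cseg_collinear a b x : on_cseg a b x -> collinear a b x.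
Proof. by case=> t [_ ->]; exact: collinear_lerp. Qed.

Lemma on_cseg_end a b : on_cseg a b a /\ on_cseg a b b.
Proof.
split; [exists 0 | exists 1]; rewrite lexx ler01; split=> //; symmetry.
  exact: lerp0.
exact: lerp1.
Qed.

Lemma on_oseg_cseg a b x : on_cseg a b x -> x != a -> x != b -> on_oseg a b x.
Proof.
case=> t [/andP[t_ge0 t_le1] xE] xa xb; exists t; split=> //.
rewrite !lt_neqAle t_ge0 t_le1 !andbT; apply/andP; split.
  by apply: contraNneq xa => t0; apply/eqP; rewrite xE -t0; exact: lerp0.
by apply: contraNneq xb => t1; apply/eqP; rewrite xE t1; exact: lerp1.
Qed.

Lemma lerp_meet_inj a b c d t u t' u' : ~ collinear a b c ->
  lerp a b t = lerp c d u -> lerp a b t' = lerp c d u' -> t = t'.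
Proof.
have subr0 (x y : R) : x = y -> x - y = 0 by move->; rewrite subrr.
move=> nabc [/subr0 E1 /subr0 E2] [/subr0 E3 /subr0 E4].
apply/eqP; rewrite -subr_eq0; apply: contra_notT nabc => tt'.
suff : (t - t') * orient a b c = 0 by move/eqP; rewrite mulf_eq0 (negbTE tt') => /eqP.
set e1 := (_ - _) in E1; set e2 := (_ - _) in E2.
set e3 := (_ - _) in E3; set e4 := (_ - _) in E4.
(* (t - t') * orient a b c is a polynomial combination of e1, ..., e4. *)
transitivity ((t - t') * (b.2 - a.2) * e1 - (t - t') * (b.1 - a.1) * e2
   - u * ((e1 - e3) * (d.2 - c.2) - (e2 - e4) * (d.1 - c.1))).
  by rewrite /e1 /e2 /e3 /e4 /orient; ring.
by rewrite E1 E2 E3 E4; ring.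
Qed.

Lemma meet_cross a b c d :
  ~ collinear a b c -> ~ collinear a b d -> ~ collinear c d a -> ~ collinear c d b ->
  (exists x, on_cseg a b x /\ on_cseg c d x) -> seg_cross a b c d.
Proof.
move=> nabc nabd ncda ncdb [x [xab xcd]].
have notin_end p q z : ~ collinear p q z -> on_cseg p q x -> x != z.
  by move=> npqz xpq; apply/eqP => xz; apply: npqz; rewrite -xz; exact: on_cseg_collinear.
exists x; split; [| split].
- move=> y; split=> [[[t' [_ ->]] [u' [_ yE]]] | ->]; last by [].
  case: xab xcd => t [_ xE] [u [_ xE']]; rewrite xE in xE' *.
  by rewrite (lerp_meet_inj nabc xE' yE).
- exact: on_oseg_cseg xab (notin_end _ _ _ ncda xcd) (notin_end _ _ _ ncdb xcd).
- exact: on_oseg_cseg xcd (notin_end _ _ _ nabc xab) (notin_end _ _ _ nabd xab).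
Qed.

End Segments.

Section SegmentsOfP.
Variables (R : realFieldType) (n : nat) (p : 'I_n -> pt R).
Hypothesis gp : general_position p.
Implicit Types (s t : seg n) (i : 'I_n).

Definition ends (s : seg n) : {set 'I_n} := [set (val s).1; (val s).2].

Lemma card_ends_le2 s : (#|ends s| <= 2)%N.
Proof. by rewrite cards2; case: (_ != _). Qed.

Lemma on_cseg_ends s i : i \in ends s -> on_cseg (p (val s).1) (p (val s).2) (p i).
Proof. by case/set2P => ->; have [] := on_cseg_end (p (val s).1) (p (val s).2). Qed.

Lemma seg_disjointP_ends s t : seg_disjointP p s t -> [disjoint ends s & ends t].
Proof.
move=> dst; apply/pred0P => i /=; apply/negP => /andP[i_s i_t].
by apply: (dst (p i)); split; apply: on_cseg_ends.
Qed.

Lemma seg_disjointP_sym s t : seg_disjointP p s t -> seg_disjointP p t s.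
Proof. by move=> dst y [ys yt]; apply: (dst y). Qed.

Lemma seg_neq_ends s : (val s).1 != (val s).2.
Proof. by rewrite neq_ltn (valP s). Qed.

Lemma clean_seg_disjointP s t : clean p s -> t != s ->
  [disjoint ends s & ends t] -> seg_disjointP p s t.
Proof.
move=> cls ts dst y ys_yt; apply: (cls t ts).
have [ns nt] := (seg_neq_ends s, seg_neq_ends t).
have notin_t i : i \in ends s -> i != (val t).1 /\ i != (val t).2.
  by move=> i_s; move: (disjointFr dst i_s); rewrite !inE => /negbT/norP.
have [[ac ad] [bc bd]] := (notin_t _ (set21 _ _), notin_t _ (set22 _ _)).
by apply: meet_cross; [apply: gp.. | exists y]; rewrite // eq_sym.
Qed.

End SegmentsOfP.

Theorem proposition11 (R : realFieldType) (n : nat) (p : 'I_n -> (R * R)%type) :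
  (5 <= n)%N ->
  injective p ->
  general_position p ->
  (exists S : {set seg n},
      #|S| = 5%N /\
      (forall s t, s \in S -> t \in S -> s != t -> seg_disjointP p s t) /\
      (forall s, s \in S -> clean p s)) ->
  mu_ge (fun s t : seg n => seg_disjointP p s t) ('C(n, 2) - 5).
Proof.
move=> _ _ gp [S [cardS [disjS cleanS]]].
exists (~: S); split; last by have := cardsC S; rewrite cardS card_seg => <-; rewrite addKn.
apply: mv_set_common_neighbour => x y; rewrite !inE => xS yS _ _.
have small_ends : (#|ends x :|: ends y| < #|S|)%N.
  rewrite cardS ltnS (leq_trans (leq_card_setU _ _)) //.
  by rewrite (leq_add (card_ends_le2 x) (card_ends_le2 y)).
have [s sS dsE] := exists_disjoint_from
  (fun s t sS tS st => seg_disjointP_ends (disjS s t sS tS st)) small_ends.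
have disj_s z : z \notin S -> [disjoint ends s & ends z] -> seg_disjointP p s z.
  move=> zS; apply: clean_seg_disjointP => //; first exact: cleanS.
  by apply: contraNneq _ zS => ->.
exists s; first by rewrite inE sS.
split; last exact: disj_s yS (disjointWr (subsetUr _ _) dsE).
exact/seg_disjointP_sym/(disj_s x xS (disjointWr (subsetUl _ _) dsE)).
Qed.
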